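(* Fix $X^*\in\mathcal X$ and assume that every neighborhood $U$ of $X^*$ in $\mathcal X$ admits a solution trajectory $X(t)=Q(Y(t))$ of FTQL with $X(t)\in U$ for all $t\ge0$. Then $X^*$ is a Nash equilibrium.
   Context: Quantum game: players $i\in\{1,\dots,N\}$, integers $d_i\ge1$; $\mathbb H^{d}$ is the real vector space of $d\times d$ complex Hermitian matrices; $\mathcal X_i=\{X_i\in\mathbb H^{d_i}:X_i\succeq0,\operatorname{tr}X_i=1\}$, $\mathcal X=\prod_i\mathcal X_i$. Payoffs $u_i(X)=\sum_{\omega\in\Omega}U_i(\omega)\operatorname{tr}[P_\omega(X_1\otimes\cdots\otimes X_N)]$ for a finite set $\Omega$, positive semidefinite $P_\omega$ with $\sum_\omega P_\omega=I$, and real $U_i$. The payoff gradient $V_i(X)\in\mathbb H^{d_i}$ is the unique Hermitian matrix with $u_i(A;X_{-i})=\operatorname{tr}(AV_i(X))$ for all $A\in\mathbb H^{d_i}$. $X^*$ is a Nash equilibrium if $u_i(X^* )\ge u_i(X_i;X^*_{-i})$ for all $X_i\in\mathcal X_i$ and all $i$. Regularizers $h_i(X_i)=\operatorname{tr}\theta_i(X_i)$ with $\theta_i:[0,1]\to\mathbb R$ continuous, twice differentiable on $(0,1]$, $\theta_i(0)=0$, $\inf_{(0,1]}\theta_i''>0$ (matrix functions via eigendecomposition). Mirror map $Q_i(Y_i)=\arg\max_{X_i\in\mathcal X_i}\{\operatorname{tr}(Y_iX_i)-h_i(X_i)\}$, $Q=\prod Q_i$. FTQL dynamics: $\dot Y_i=V_i(X)$,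 $X_i=Q_i(Y_i)$. *)

From HB Require Import structures.
From mathcomp Require Import all_boot all_order all_algebra.
From mathcomp Require Import complex.
From mathcomp Require Import boolp classical_sets functions reals topology
  normedtype derive set_interval.

Set Implicit Arguments.
Unset Strict Implicit.
Unset Printing Implicit Defensive.

Import Order.TTheory GRing.Theory Num.Theory.
Import numFieldNormedType.Exports.
Local Open Scope classical_set_scope.
Local Open Scope ring_scope.

Section QuantumGame.

Variable R : realType.
Local Notation C := (R[i]).

Definition psd n (A : 'M[C]_n) : Prop :=
  A \is hermsymmx /\
  forall z : 'rV[C]_n, 0 <= (z *m A *m map_mx Num.conj z^T) 0 0.

Definition state n (A : 'M[C]_n) : Prop := psd A /\ \tr A = 1.

Variables (N : nat) (d : 'I_N -> nat).

(* Index set of the computational basis of H^{d_1} (x) ... (x) H^{d_N}. *)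
Definition jidx := {dffun forall j : 'I_N, 'I_(d j)}.

(* Matrices on the joint space are indexed by 'I_#|jidx| (via enum_val). *)
Definition jdim := #|jidx|.

Definition profile := forall i : 'I_N, 'M[C]_(d i).

Definition profile_state (X : profile) : Prop := forall i, state (X i).

Definition kron (X : profile) : 'M[C]_jdim :=
  \matrix_(a, b) \prod_(j < N)
     X j ((enum_val (a : 'I_#|jidx|) : jidx) j) ((enum_val (b : 'I_#|jidx|) : jidx) j).

Definition kron_dev (i : 'I_N) (A : 'M[C]_(d i)) (X : profile) : 'M[C]_jdim :=
  \matrix_(a, b) \prod_(j < N)
     (if j == i then A ((enum_val (a : 'I_#|jidx|) : jidx) i)
                       ((enum_val (b : 'I_#|jidx|) : jidx) i)
      else X j ((enum_val (a : 'I_#|jidx|) : jidx) j) ((enum_val (b : 'I_#|jidx|) : jidx) j)).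

Variables (Omega : finType) (P : Omega -> 'M[C]_jdim) (U : 'I_N -> Omega -> R).

Definition payoffC_dev (i : 'I_N) (A : 'M[C]_(d i)) (X : profile) : C :=
  \sum_(w : Omega) (Complex (U i w) 0) * \tr (P w *m kron_dev A X).

(* real-valued payoffs (the above is real for Hermitian data) *)
Definition payoff_dev (i : 'I_N) (A : 'M[C]_(d i)) (X : profile) : R :=
  complex.Re (payoffC_dev A X).

Definition payoff (i : 'I_N) (X : profile) : R :=
  complex.Re (\sum_(w : Omega) (Complex (U i w) 0) * \tr (P w *m kron X)).

Definition is_payoff_gradient (i : 'I_N) (X : profile) (V : 'M[C]_(d i)) : Prop :=
  V \is hermsymmx /\
  forall A : 'M[C]_(d i), A \is hermsymmx -> payoffC_dev A X = \tr (A *m V).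

Definition nash (X : profile) : Prop :=
  profile_state X /\
  forall (i : 'I_N) (A : 'M[C]_(d i)), state A -> payoff_dev A X <= payoff i X.

Definition mxfun (theta : R -> R) n (X : 'M[C]_n) : 'M[C]_n :=
  invmx (spectralmx X) *m
  diag_mx (\row_j Complex (theta (complex.Re (spectral_diag X 0 j))) 0) *m
  spectralmx X.

Definition reg_h (theta : R -> R) n (X : 'M[C]_n) : R := complex.Re (\tr (mxfun theta X)).

Definition admissible_theta (theta : R -> R) : Prop :=
  {within `[0, 1], continuous theta} /\
  theta 0 = 0 /\
  (forall x : R, 0 < x <= 1 ->
     derivable theta x 1 /\ derivable (derive1 theta) x 1) /\
  exists2 c : R, 0 < c &
     forall x : R, 0 < x <= 1 -> c <= derive1 (derive1 theta) x.

Definition mirror (theta : R -> R) n (Y X : 'M[C]_n) : Prop :=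
  state X /\
  forall X' : 'M[C]_n, state X' ->
    complex.Re (\tr (Y *m X')) - reg_h theta X' <= complex.Re (\tr (Y *m X)) - reg_h theta X.

Definition FTQL_solution (theta : 'I_N -> R -> R)
    (Y X : R -> profile) : Prop :=
  (forall t : R, 0 <= t -> forall i, Y t i \is hermsymmx /\
                                     mirror (theta i) (Y t i) (X t i)) /\
  (forall i a b, {within `[0, +oo[, continuous (fun t => complex.Re (Y t i a b))} /\
                 {within `[0, +oo[, continuous (fun t => complex.Im (Y t i a b))}) /\
  (forall t : R, 0 < t -> forall i, exists V : 'M[C]_(d i),
      is_payoff_gradient (X t) V /\
      forall a b, is_derive t (1 : R) (fun s => complex.Re (Y s i a b)) (complex.Re (V a b)) /\
                  is_derive t (1 : R) (fun s => complex.Im (Y s i a b)) (complex.Im (V a b))).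

End QuantumGame.

From HB Require Import structures.
From mathcomp Require Import all_boot all_order all_algebra.
From mathcomp Require Import complex.
From mathcomp Require Import boolp classical_sets functions reals topology
  normedtype derive set_interval.
From mathcomp Require Import sesquilinear spectral ring lra.
Import Order.TTheory GRing.Theory Num.Theory.
Import numFieldNormedType.Exports.
Local Open Scope classical_set_scope.
Local Open Scope ring_scope.
Set Implicit Arguments.
Unset Strict Implicit.
Unset Printing Implicit Defensive.

(* Suppose player i has a profitable deviation A from Xs, with gain
   c = u_i(A; Xs_{-i}) - u_i(Xs) > 0.  Payoffs are multilinear, hence
   continuous, so the gain u_i(A; X_{-i}) - u_i(B; X_{-i}) stays >= c/2 for
   all X near Xs and all B near Xs_i.  Take a trajectory staying in such a
   neighbourhood and a time T, and set B = X_i(T).  Since dY_i/dt = V_i(X)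
   and tr(V_i(X) M) = u_i(M; X_{-i}), the pairing F(t) = tr(Y_i(t)(A - B))
   has derivative >= c/2, so F(T) - F(1) >= (T - 1) c/2.  On the other hand
   X_i(T) = Q_i(Y_i(T)) maximises tr(Y_i(T) X) - h_i(X), whence
   F(T) <= h_i(A) - h_i(X_i(T)) <= h_i(A) - inf h_i, while F(1) stays within
   a T-independent distance of tr(Y_i(1)(A - Xs_i)).  For large T this is
   absurd. *)

Section EntrywiseBounds.
Variable F : numDomainType.

Definition mxnorm1 m n (A : 'M[F]_(m, n)) : F := \sum_a \sum_b `|A a b|.

Lemma mxnorm1_ge0 m n (A : 'M[F]_(m, n)) : 0 <= mxnorm1 A.
Proof. by apply: sumr_ge0 => a _; apply: sumr_ge0. Qed.

Lemma ler_sum_term (T : finType) (f : T -> F) x :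
  (forall y, 0 <= f y) -> f x <= \sum_y f y.
Proof. by move=> f_ge0; rewrite (bigD1 x) //= lerDl sumr_ge0. Qed.

Lemma entry_le_mxnorm1 m n (A : 'M[F]_(m, n)) a b : `|A a b| <= mxnorm1 A.
Proof.
rewrite /mxnorm1.
apply: le_trans (@ler_sum_term _ (fun b' => `|A a b'|) b (fun _ => normr_ge0 _)) _.
by apply: (@ler_sum_term _ (fun a' => \sum_b `|A a' b|)) => a'; apply: sumr_ge0.
Qed.

Lemma prod_norm_le (I : Type) (r : seq I) (a : I -> F) (M : F) :
  (forall j, `|a j| <= M) -> `|\prod_(j <- r) a j| <= M ^+ size r.
Proof.
move=> a_le; elim: r => [|x r IH]; first by rewrite big_nil normr1.
by rewrite big_cons normrM /= exprS; apply: ler_pM.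
Qed.

Lemma prod_perturb (I : Type) (r : seq I) (a b : I -> F) (del M : F) :
  0 <= del -> del <= 1 -> 0 <= M -> (forall j, `|a j - b j| <= del) ->
  (forall j, `|b j| <= M) ->
  `|\prod_(j <- r) a j - \prod_(j <- r) b j| <= del * (size r)%:R * (M + 1) ^+ size r.
Proof.
move=> del0 del1 M0 ab_le b_le.
have a_le j : `|a j| <= M + 1.
  rewrite -(subrK (b j) (a j)) addrC.
  by apply: le_trans (ler_normD _ _) _; apply: lerD; last exact: le_trans (ab_le j) del1.
have M10 : 0 <= M + 1 by apply: addr_ge0.
elim: r => [|x r IH]; first by rewrite !big_nil subrr normr0 !mulr_ge0 ?exprn_ge0 ?ler0n.
rewrite !big_cons /=.
have -> : a x * \prod_(j <- r) a j - b x * \prod_(j <- r) b j =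
  (a x - b x) * \prod_(j <- r) a j + b x * (\prod_(j <- r) a j - \prod_(j <- r) b j)
  by ring.
set k := size r.
apply: le_trans (ler_normD _ _) _; rewrite !normrM.
apply: le_trans (_ : del * (M + 1) ^+ k + M * (del * k%:R * (M + 1) ^+ k) <= _).
  by apply: lerD; apply: ler_pM => //; exact: prod_norm_le.
rewrite -subr_ge0.
have -> : del * (k.+1)%:R * (M + 1) ^+ k.+1 -
     (del * (M + 1) ^+ k + M * (del * k%:R * (M + 1) ^+ k)) =
     del * (M + 1) ^+ k * (k%:R + M).
  by rewrite exprS -addn1 natrD; ring.
by rewrite !mulr_ge0 ?exprn_ge0 ?addr_ge0 ?ler0n.
Qed.

Lemma tr_perturb n (M K K0 : 'M[F]_n) (del : F) :
  (forall a b, `|K a b - K0 a b| <= del) ->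
  `|\tr (M *m K) - \tr (M *m K0)| <= del * mxnorm1 M.
Proof.
move=> K_le; rewrite -raddfB -mulmxBr /mxtrace.
apply: le_trans (ler_norm_sum _ _ _) _; rewrite mulr_sumr; apply: ler_sum => a _.
rewrite mxE; apply: le_trans (ler_norm_sum _ _ _) _; rewrite mulr_sumr.
apply: ler_sum => b _; rewrite normrM mulrC; apply: ler_wpM2r => //.
by rewrite !mxE; apply: K_le.
Qed.

End EntrywiseBounds.

Lemma gap_persists (F : realDomainType) (a1 b1 a2 b2 e : F) :
  `|a1 - b1| + `|a2 - b2| <= e -> b1 - b2 - e <= a1 - a2.
Proof.
by have := ler_norm (b1 - a1); have := ler_norm (a2 - b2);
  rewrite [`|b1 - a1|]distrC; lra.
Qed.

Section ComplexParts.
Variable R : realType.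
Local Notation C := (R[i]).

Lemma Re_sum (I : Type) (r : seq I) (f : I -> C) :
  complex.Re (\sum_(i <- r) f i) = \sum_(i <- r) complex.Re (f i).
Proof.
elim: r => [|x r IH]; first by rewrite !big_nil.
by rewrite !big_cons -IH; case: (f x); case: (\sum_(i <- r) f i).
Qed.

Lemma ReB (x y : C) : complex.Re x - complex.Re y = complex.Re (x - y).
Proof. by case: x; case: y. Qed.

Lemma Re_le (x y : C) : x <= y -> complex.Re x <= complex.Re y.
Proof. by rewrite lecE => /andP[]. Qed.

Lemma Re_norm_le (w : C) : `|complex.Re w| <= complex.Re `|w|.
Proof.
rewrite normc_def /= -sqrtr_sqr ler_sqrt ?addr_ge0 ?sqr_ge0 //.
by rewrite lerDl sqr_ge0.
Qed.

Lemma norm_le_ReIm (w : C) (e : R) :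
  `|complex.Re w| < e -> `|complex.Im w| < e -> `|w| <= ((2 * e)%:C)%C.
Proof.
move=> Re_lt Im_lt; have e0 : 0 < e by apply: le_lt_trans Re_lt.
rewrite normc_def lecR.
have -> : 2 * e = Num.sqrt ((2 * e) ^+ 2).
  by rewrite sqrtr_sqr ger0_norm // mulr_ge0 // ltW.
rewrite ler_sqrt ?sqr_ge0 //.
rewrite -(real_normK (num_real (complex.Re w))) -(real_normK (num_real (complex.Im w))).
have := normr_ge0 (complex.Re w); have := normr_ge0 (complex.Im w).
nra.
Qed.

(* Real part of a trace in terms of real and imaginary parts of entries;
   this makes Re tr(Y B) a real-linear function of the entries of Y. *)
Lemma Re_tr n (M B : 'M[C]_n) : complex.Re (\tr (M *m B)) =
  \sum_a \sum_b (complex.Re (M a b) * complex.Re (B b a) -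
                 complex.Im (M a b) * complex.Im (B b a)).
Proof.
rewrite /mxtrace Re_sum; apply: eq_bigr => a _; rewrite mxE Re_sum.
by apply: eq_bigr => b _; case: (M a b) => x y; case: (B b a).
Qed.

Lemma tr_perturb_Re n (M : 'M[C]_n) : exists s : R, forall (del : R) (K K0 : 'M[C]_n),
  (forall a b, `|K a b - K0 a b| <= (del%:C)%C) ->
  `|complex.Re (\tr (M *m K)) - complex.Re (\tr (M *m K0))| <= del * s.
Proof.
exists (complex.Re (mxnorm1 M)) => del K K0 /(tr_perturb M) /Re_le.
rewrite ReB => Re_le_norm.
apply: le_trans (Re_norm_le _) _; apply: le_trans Re_le_norm _.
by case: (mxnorm1 M) => x y /=; rewrite mul0r subr0.
Qed.

End ComplexParts.

Section Regulariser.
Variable R : realType.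
Local Notation C := (R[i]).

Lemma spectral_diag_quadratic n (X : 'M[C]_n) j :
  X \is hermsymmx ->
  spectral_diag X 0 j =
  (row j (spectralmx X) *m X *m map_mx Num.conj (row j (spectralmx X))^T) 0 0.
Proof.
move=> Xh.
have XE : X = invmx (spectralmx X) *m diag_mx (spectral_diag X) *m spectralmx X.
  by apply/orthomx_spectralP/hermitian_normalmx.
have Su := spectral_unit X.
have Uu := spectral_unitarymx X.
move: XE Su Uu; set S := spectralmx X; set lam := spectral_diag X => XE Su Uu.
have : S *m X *m invmx S = diag_mx lam.
  by rewrite [in LHS]XE !mulmxA mulmxV // mul1mx mulmxK.
rewrite invmx_unitary // => E.
have -> : lam 0 j = (S *m X *m S^t*%sesqui) j j by rewrite E mxE eqxx mulr1n.
rewrite !mxE; apply: eq_bigr => k _; rewrite !mxE; congr (_ * _).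
by apply: eq_bigr => l _; rewrite !mxE.
Qed.

Lemma trace_spectral_conj n (X D : 'M[C]_n) :
  \tr (invmx (spectralmx X) *m D *m spectralmx X) = \tr D.
Proof. by rewrite mxtrace_mulC mulmxA mulmxV ?spectral_unit // mul1mx. Qed.

(* The eigenvalues of a density matrix lie in [0, 1]: they are nonnegative
   by positivity and sum to the trace 1. *)
Lemma spectral_diag_range n (X : 'M[C]_n) j : state X ->
  0 <= complex.Re (spectral_diag X 0 j) <= 1.
Proof.
move=> [[Xh Xpsd] trX].
have Re_ge0 k : 0 <= complex.Re (spectral_diag X 0 k).
  by apply: (@Re_le R 0); rewrite spectral_diag_quadratic //; apply: Xpsd.
have XE : X = invmx (spectralmx X) *m diag_mx (spectral_diag X) *m spectralmx X.
  by apply/orthomx_spectralP/hermitian_normalmx.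
have sum1 : \sum_k complex.Re (spectral_diag X 0 k) = 1.
  by rewrite -Re_sum -mxtrace_diag -(trace_spectral_conj X) -XE trX.
by rewrite Re_ge0 /= -sum1 (bigD1 j) //= lerDl sumr_ge0.
Qed.

(* h = tr theta is bounded below on density matrices by n min_[0,1] theta,
   since theta is continuous on [0, 1] (extreme value theorem). *)
Lemma reg_h_lb (theta : R -> R) n : {within `[0, 1], continuous theta} ->
  exists L : R, forall X : 'M[C]_n, state X -> L <= reg_h theta X.
Proof.
move=> theta_cont; have [c _ c_min] := EVT_min ler01 theta_cont.
exists (theta c *+ n) => X sX.
rewrite /reg_h /mxfun trace_spectral_conj mxtrace_diag Re_sum.
rewrite -[n in theta c *+ n]card_ord -sumr_const.
apply: ler_sum => j _; rewrite mxE /=; apply: c_min.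
by rewrite in_itv /=; apply: spectral_diag_range.
Qed.

Lemma mirror_pairing_le (theta : R -> R) n (Y X A : 'M[C]_n) :
  mirror theta Y X -> state A ->
  complex.Re (\tr (Y *m (A - X))) <= reg_h theta A - reg_h theta X.
Proof.
by move=> [_ X_opt] /X_opt; rewrite mulmxBr raddfB /= -ReB; lra.
Qed.

End Regulariser.

Section Calculus.
Variable R : realType.
Local Notation C := (R[i]).

Lemma is_derive_lin (f g : R -> R) t df dg (k l : R) :
  is_derive t (1 : R) f df -> is_derive t (1 : R) g dg ->
  is_derive t (1 : R) (fun s => f s * k - g s * l) (df * k - dg * l).
Proof.
move=> f_der g_der.
have H := is_deriveB (is_deriveZ k f_der) (is_deriveZ l g_der).
have -> : (fun s => f s * k - g s * l) = k \*: f - l \*: g.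
  by apply/funext => s /=; rewrite (mulrC (f s)) (mulrC (g s)).
by apply: is_derive_eq H _; rewrite (mulrC df) (mulrC dg).
Qed.

Lemma is_derive_sumf n (h : 'I_n -> R -> R) t (dh : 'I_n -> R) :
  (forall i, is_derive t (1 : R) (h i) (dh i)) ->
  is_derive t (1 : R) (fun s => \sum_(i < n) h i s) (\sum_(i < n) dh i).
Proof. by move=> h_der; rewrite -fct_sumE; apply: is_derive_sum. Qed.

Lemma deriv_Re_trace n (Y : R -> 'M[C]_n) (B V : 'M[C]_n) t :
  (forall a b, is_derive t (1 : R) (fun s => complex.Re (Y s a b)) (complex.Re (V a b)) /\
               is_derive t (1 : R) (fun s => complex.Im (Y s a b)) (complex.Im (V a b))) ->
  is_derive t (1 : R) (fun s => complex.Re (\tr (Y s *m B))) (complex.Re (\tr (V *m B))).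
Proof.
move=> Y_der.
have -> : (fun s => complex.Re (\tr (Y s *m B))) = (fun s =>
  \sum_a \sum_b (complex.Re (Y s a b) * complex.Re (B b a) -
                 complex.Im (Y s a b) * complex.Im (B b a))).
  by apply/funext => s; rewrite Re_tr.
rewrite Re_tr; apply: is_derive_sumf => a.
apply: (@is_derive_sumf _ (fun b s => complex.Re (Y s a b) * complex.Re (B b a) -
                 complex.Im (Y s a b) * complex.Im (B b a))) => b.
by have [Re_der Im_der] := Y_der a b; apply: is_derive_lin.
Qed.

Lemma deriv_lb_growth (f : R -> R) (k T : R) : 1 <= T ->
  (forall x : R, 0 < x -> exists2 df : R, is_derive x (1 : R) f df & k <= df) ->
  k * (T - 1) <= f T - f 1.
Proof.
move=> T1 f_der; pose g s := f s * 1 - s * k.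
have g_der (x : R) : 0 < x -> exists2 dg : R, is_derive x (1 : R) g dg & 0 <= dg.
  move=> x0; have [df df_der k_le] := f_der x x0.
  exists (df * 1 - 1 * k); first exact: is_derive_lin df_der (is_derive_id x 1).
  by rewrite mulr1 mul1r subr_ge0.
have : g 1 <= g T.
  apply: (@ger0_derive1_ndecry _ g 1) => //.
  - move=> x; rewrite in_itv /= andbT => x1.
    by have [dg ? _] := g_der x (lt_trans ltr01 x1); apply: ex_derive.
  - move=> x; rewrite in_itv /= andbT => x1.
    have [dg dg_der dg0] := g_der x (lt_trans ltr01 x1).
    by rewrite derive1E derive_val.
  - apply: derivable_within_continuous => x; rewrite in_itv /= andbT => x1.
    by have [dg ? _] := g_der x (lt_le_trans ltr01 x1); apply: ex_derive.
by rewrite /g !mulr1 mul1r mulrBr mulr1 (mulrC k); lra.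
Qed.

End Calculus.

Section Game.
Variable R : realType.
Local Notation C := (R[i]).
Variables (N : nat) (d : 'I_N -> nat) (Omega : finType)
  (P : Omega -> 'M[C]_(jdim d)) (U : 'I_N -> Omega -> R).

Lemma kron_dev_self (X : profile R d) i : kron_dev (X i) X = kron X.
Proof.
apply/matrixP => a b; rewrite !mxE; apply: eq_bigr => j _.
by case: eqP => // ->.
Qed.

Lemma payoff_self (X : profile R d) i :
  complex.Re (payoffC_dev P U (X i) X) = payoff P U i X.
Proof. by rewrite /payoffC_dev kron_dev_self. Qed.

(* The payoff u_i(B; X_{-i}) is locally Lipschitz in (B, X): it is a sum of
   traces of P_w against entrywise products of the strategies. *)
Lemma payoff_perturb i (B0 : 'M[C]_(d i)) (X0 : profile R d) :
  exists k : R, 0 <= k /\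
  forall del : R, 0 <= del -> del <= 1 ->
  forall (B : 'M[C]_(d i)) (X : profile R d),
  (forall a b, `|B a b - B0 a b| <= (del%:C)%C) ->
  (forall j a b, `|X j a b - X0 j a b| <= (del%:C)%C) ->
  `|complex.Re (payoffC_dev P U B X) - complex.Re (payoffC_dev P U B0 X0)| <= del * k.
Proof.
pose M : C := mxnorm1 B0 + \sum_j mxnorm1 (X0 j).
have M0 : 0 <= M by rewrite addr_ge0 ?mxnorm1_ge0 ?sumr_ge0 // => j _; apply: mxnorm1_ge0.
pose Kc : C := \sum_w `|Complex (U i w) 0| * (mxnorm1 (P w) * (N%:R * (M + 1) ^+ N)).
have Kc0 : 0 <= Kc.
  apply: sumr_ge0 => w _; rewrite !mulr_ge0 ?mxnorm1_ge0 ?ler0n ?exprn_ge0 //.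
  exact: addr_ge0.
exists (complex.Re Kc); split; first exact: (@Re_le R 0).
move=> del del0 del1 B X B_le X_le.
have delC0 : 0 <= (del%:C)%C :> C by rewrite ler0c.
have delC1 : (del%:C)%C <= 1 :> C by rewrite -[1]/((1%:C)%C) lecR.
suff H : `|payoffC_dev P U B X - payoffC_dev P U B0 X0| <= (del%:C)%C * Kc.
  rewrite ReB; apply: le_trans (Re_norm_le _) _; apply: le_trans (Re_le H) _.
  by case: (Kc) => x y /=; rewrite mul0r subr0.
rewrite /payoffC_dev -sumrB /Kc mulr_sumr.
apply: le_trans (ler_norm_sum _ _ _) _; apply: ler_sum => w _.
rewrite -mulrBr normrM.
pose Mp := (M + 1) ^+ N.
have -> : (del%:C)%C * (`|Complex (U i w) 0| * (mxnorm1 (P w) * (N%:R * Mp))) =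
   `|Complex (U i w) 0| * (((del%:C)%C * N%:R * Mp) * mxnorm1 (P w)) by ring.
apply: ler_wpM2l => //; apply: tr_perturb => a b; rewrite !mxE.
have sz : size (index_enum 'I_N) = N by rewrite -[index_enum _]enumT size_enum_ord.
rewrite /Mp -[N in N%:R]sz -[N in _ ^+ N]sz.
apply: prod_perturb => //.
- by move=> j; case: eqP => _; [exact: B_le | exact: X_le].
- move=> j; case: eqP => _.
  + apply: le_trans (entry_le_mxnorm1 B0 _ _) _.
    by rewrite lerDl sumr_ge0 // => j' _; apply: mxnorm1_ge0.
  + apply: le_trans (entry_le_mxnorm1 (X0 j) _ _) _.
    apply: le_trans (@ler_sum_term _ _ (fun j' => mxnorm1 (X0 j')) j
      (fun j' => mxnorm1_ge0 (X0 j'))) _.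
    by rewrite lerDr mxnorm1_ge0.
Qed.

Lemma deviation_gain_near i (A : 'M[C]_(d i)) (X0 : profile R d) :
  payoff P U i X0 < payoff_dev P U A X0 ->
  exists2 del : R, 0 < del &
  forall (B : 'M[C]_(d i)) (X : profile R d),
    (forall a b, `|B a b - X0 i a b| <= (del%:C)%C) ->
    (forall j a b, `|X j a b - X0 j a b| <= (del%:C)%C) ->
    (payoff_dev P U A X0 - payoff P U i X0) / 2 <=
      complex.Re (payoffC_dev P U A X) - complex.Re (payoffC_dev P U B X).
Proof.
rewrite -subr_gt0; set c := _ - _ => gain.
have [k1 [k1_ge0 A_near]] := payoff_perturb A X0.
have [k2 [k2_ge0 B_near]] := payoff_perturb (X0 i) X0.
have K0 : 0 < 4 * (k1 + k2 + 1) by rewrite mulr_gt0 // ltr_wpDl // addr_ge0.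
pose del := Num.min 1 (c / (4 * (k1 + k2 + 1))).
have del0 : 0 < del by rewrite lt_min ltr01 divr_gt0.
have del1 : del <= 1 by rewrite ge_min lexx.
have delK : del * (k1 + k2 + 1) <= c / 4.
  by rewrite ler_pdivlMr // -mulrA (mulrC _ 4) -ler_pdivlMr // ge_min lexx orbT.
exists del => // B X B_le X_le.
have A_le : `|complex.Re (payoffC_dev P U A X) - complex.Re (payoffC_dev P U A X0)| <= del * k1.
  by apply: A_near => // [|a b]; [exact: ltW | rewrite subrr normr0 ler0c ltW].
have B_le' := B_near del (ltW del0) del1 B X B_le X_le.
have := gap_persists (lerD A_le B_le'); rewrite payoff_self -/(payoff_dev P U A X0) -/c.
by move: gain delK; lra.
Qed.

(* Along an FTQL trajectory, if deviating from B to A gains at least k at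
   every time t > 0, the pairing Re tr(Y_i(t)(A - B)) grows at rate >= k:
   its derivative is Re tr(V_i(X(t))(A - B)) = u_i(A; X_{-i}) - u_i(B; X_{-i}). *)
Lemma ftql_pairing_growth (theta : 'I_N -> R -> R) (Y X : R -> profile R d) i
    (A B : 'M[C]_(d i)) (k T : R) :
  FTQL_solution P U theta Y X -> A \is hermsymmx -> B \is hermsymmx -> 1 <= T ->
  (forall t, 0 < t ->
     k <= complex.Re (payoffC_dev P U A (X t)) - complex.Re (payoffC_dev P U B (X t))) ->
  k * (T - 1) <= complex.Re (\tr (Y T i *m (A - B))) - complex.Re (\tr (Y 1 i *m (A - B))).
Proof.
move=> [_ [_ Y_der]] A_herm B_herm T1 gain.
apply: (@deriv_lb_growth _ (fun s => complex.Re (\tr (Y s i *m (A - B))))) => // t t0.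
have [V [[_ V_grad] V_der]] := Y_der t t0 i.
exists (complex.Re (\tr (V *m (A - B)))).
  exact: (deriv_Re_trace (Y := fun s => Y s i)).
rewrite mxtrace_mulC mulmxBl raddfB /= -(V_grad A A_herm) -(V_grad B B_herm) -ReB.
exact: gain.
Qed.

End Game.

Theorem lemmaD1 (R : realType) (N : nat) (d : 'I_N -> nat)
  (Omega : finType) (P : Omega -> 'M[R[i]]_(jdim d)) (U : 'I_N -> Omega -> R)
  (theta : 'I_N -> R -> R) (Xs : profile R d) :
  (forall i, (0 < d i)%N) ->
  (forall w, psd (P w)) ->
  \sum_(w : Omega) P w = 1%:M ->
  (forall i, admissible_theta (theta i)) ->
  profile_state Xs ->
  (* every neighbourhood of Xs in the joint state space contains a whole
     FTQL trajectory X(t) = Q(Y(t)), t >= 0 *)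
  (forall eps : R, 0 < eps ->
     exists (Y X : R -> profile R d),
       FTQL_solution P U theta Y X /\
       forall t : R, 0 <= t -> forall i a b,
         `|complex.Re (X t i a b - Xs i a b)| < eps /\ `|complex.Im (X t i a b - Xs i a b)| < eps) ->
  nash P U Xs.
Proof.
move=> _ _ _ adm Xs_state traj; split=> // i A A_state.
rewrite leNgt; apply/negP => gain.
have [del del0 gain_near] := deviation_gain_near gain.
have := gain; rewrite -subr_gt0.
move: (payoff_dev P U A Xs - payoff P U i Xs) gain_near => c gain_near c0.
have [Y [X [sol X_near]]] := traj (del / 2) ltac:(by rewrite divr_gt0).
have X_close t j a b : 0 <= t -> `|X t j a b - Xs j a b| <= (del%:C)%C.
  move=> t0; have [Re_lt Im_lt] := X_near t t0 j a b.
  by have := norm_le_ReIm Re_lt Im_lt; rewrite mulrC divfK ?pnatr_eq0.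
have X_state t : 0 <= t -> state (X t i) by move=> t0; have [_ [] ] := sol.1 t t0 i.
have [L L_le] := @reg_h_lb R (theta i) (d i) (adm i).1.
have [S S_le] := tr_perturb_Re (Y 1 i).
pose Q := reg_h (theta i) A - L - complex.Re (\tr (Y 1 i *m (A - Xs i))) + del * S.
pose T := 1 + 2 * (`|Q| + 1) / c.
have T1 : 1 <= T by rewrite lerDl divr_ge0 ?mulr_ge0 ?addr_ge0 // ltW.
have T0 : 0 <= T := le_trans ler01 T1.
have TQ : c / 2 * (T - 1) = `|Q| + 1 by rewrite /T; field; exact: lt0r_neq0.
have growth := ftql_pairing_growth sol A_state.1.1 (X_state T T0).1.1 T1
  (fun t t0 => gain_near _ _ (fun a b => X_close T i a b T0)
                               (fun j a b => X_close t j a b (ltW t0))).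
have top := mirror_pairing_le (sol.1 T T0 i).2 A_state.
have /ler_normlP[bottom _] : `|complex.Re (\tr (Y 1 i *m (A - X T i))) -
    complex.Re (\tr (Y 1 i *m (A - Xs i)))| <= del * S.
  apply: S_le => a b; rewrite !mxE.
  by rewrite (_ : _ - _ = - (X T i a b - Xs i a b)) ?normrN ?X_close //; ring.
move: growth top bottom TQ (L_le _ (X_state T T0)) (ler_norm Q); rewrite /Q; lra.
Qed.
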